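(* For a given $r \in (R_c,R_0)$ the function $s \mapsto \sigma(s;r)$ increases for $s \in (s_0,s_-(r))$, decreases for $s \in (s_-(r),s_+(r))$ and increases to infinity for $s \in (s_+(r),+\infty)$.
   Context: Setting: two-dimensional steady unidirectional water waves with vorticity on finite depth, in non-dimensional units (mass flux $m=1$, gravity $g=1$). The vorticity $\omega=\omega(p)$ is a function of the stream function value $p\in[0,1]$, and $\Omega(p)=\int_0^p \omega(\tau)\,d\tau$. Let $s_0=\sqrt{\max_{p\in[0,1]}2\Omega(p)}$. For $s>s_0$ the laminar (stream) solutions in height-function form are $H(p;s)=\int_0^p \frac{d\tau}{\sqrt{s^2-2\Omega(\tau)}}$, $p\in[0,1]$, with depth $d(s)=H(1;s)$ and Bernoulli constant $R(s)=\tfrac12 s^2-\Omega(1)+d(s)$. As a function of $s$, $R(s)$ decreases from $R_0=\lim_{s\to s_0+}R(s)$ to $R_c$ as $s$ goes from $s_0$ to the critical value $s_c$ (defined by $\int_0^1 (s^2-2\Omega(p))^{-3/2}dp=1$), and increases to infinity for $s>s_c$. Hence for $r\in(R_c,R_0)$ the equation $R(s)=r$ has exactly two solutions $s_-(r)<s_c<s_+(r)$. For $r>R_c$ and $s>s_0$ define $$\sigma(s;r)=\int_0^1\Big(\frac{1}{2H_p^2(p;s)}-H(p;s)-\Omega(p)+\Omega(1)+r\Big)H_p(p;s)\,dp,$$ i.e. the flow force constant of the stream solution $H(p;s)$ with its Bernoulli constant $R(s)$ replaced by $r$. *)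

From Stdlib Require Import Reals.
From Coquelicot Require Export Coquelicot.
Open Scope R_scope.

Definition Omega (om : R -> R) (p : R) : R := RInt om 0 p.

Definition Hp (om : R -> R) (s p : R) : R := / sqrt (s ^ 2 - 2 * Omega om p).

Definition Hfun (om : R -> R) (s p : R) : R := RInt (fun t => Hp om s t) 0 p.

Definition depth (om : R -> R) (s : R) : R := Hfun om s 1.

Definition Bern (om : R -> R) (s : R) : R := s ^ 2 / 2 - Omega om 1 + depth om s.

Definition flow_force (om : R -> R) (s r : R) : R :=
  RInt (fun p => (/ (2 * (Hp om s p) ^ 2) - Hfun om s p - Omega om p + Omega om 1 + r)
                   * Hp om s p) 0 1.

(* With g(p; s) = s^2 - 2 Omega(p), the depth d(s) = int g^(-1/2) and the Bernoulli
   constant B(s) = s^2/2 - Omega(1) + d(s) satisfy d' = -s J and B' = s (1 - J), where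
   J(s) = int g^(-3/2) is positive and strictly decreasing with J(s_c) = 1.  Hence B
   decreases on (s_0, s_c) and increases afterwards, so B - r is positive on (s_0, s_-),
   negative on (s_-, s_+) and positive beyond s_+.
   Since 1/(2 H_p^2) = g/2 and int H H_p = d^2/2, the flow force is
   sigma = int g^(1/2) + (Omega(1) + r - s^2/2) d - d^2/2, and its derivative collapses to
   sigma' = s (B - r) J, so sigma is monotone exactly as the sign of B - r dictates.
   Finally sigma(s) >= (s - s_0)/2 - C, so sigma tends to infinity. *)

From Stdlib Require Import Reals Lra.
From Coquelicot Require Import Coquelicot.
Open Scope R_scope.

Lemma continuous_sq_sub (Q : R -> R) (u t : R) :
  continuous Q t -> continuous (fun v => u ^ 2 - 2 * Q v) t.
Proof.
  intros HQ. apply (continuous_minus (fun _ => u ^ 2) (fun v => 2 * Q v)).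
  - apply continuous_const.
  - apply (continuous_scal_r 2 Q), HQ.
Qed.

Lemma continuity_2d_pt_sq_sub (Q : R -> R) (u t : R) :
  continuous Q t -> continuity_2d_pt (fun u v => u ^ 2 - 2 * Q v) u t.
Proof.
  intros HQ. apply continuity_2d_pt_minus.
  - apply (continuity_2d_pt_ext (fun u v => u * (u * 1))); [intros; simpl; ring |].
    apply continuity_2d_pt_mult; [apply continuity_2d_pt_id1 |].
    apply continuity_2d_pt_mult; [apply continuity_2d_pt_id1 | apply continuity_2d_pt_const].
  - apply continuity_2d_pt_mult; [apply continuity_2d_pt_const |].
    apply (continuity_1d_2d_pt_comp Q (fun u v => v)); [| apply continuity_2d_pt_id2].
    now apply continuity_pt_filterlim.
Qed.

Lemma continuity_2d_pt_locally_pos (f : R -> R -> R) (x y : R) :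
  continuity_2d_pt f x y -> 0 < f x y -> locally_2d (fun u v => 0 < f u v) x y.
Proof.
  intros Hf Hpos.
  apply (locally_2d_impl (fun u v => Rabs (f u v - f x y) < f x y)).
  - apply locally_2d_forall. intros u v H. apply Rabs_def2 in H. lra.
  - exact (Hf (mkposreal _ Hpos)).
Qed.

Lemma is_derive_comp_sq_sub (G G' Q : R -> R) (u t : R) :
  is_derive G (u ^ 2 - 2 * Q t) (G' (u ^ 2 - 2 * Q t)) ->
  is_derive (fun z => G (z ^ 2 - 2 * Q t)) u (2 * u * G' (u ^ 2 - 2 * Q t)).
Proof.
  intros HG.
  assert (Hsq : is_derive (fun z => z ^ 2 - 2 * Q t) u (2 * u)) by (auto_derive; [auto | ring]).
  exact (is_derive_comp _ _ u _ _ HG Hsq).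
Qed.

Lemma is_derive_RInt_sq_sub (G G' Q : R -> R) (a b s : R) :
  (forall t, Rmin a b <= t <= Rmax a b -> continuous Q t) ->
  (forall y, 0 < y -> is_derive G y (G' y)) ->
  (forall y, 0 < y -> continuous G' y) ->
  locally s (fun u => forall t, Rmin a b <= t <= Rmax a b -> 0 < u ^ 2 - 2 * Q t) ->
  is_derive (fun u => RInt (fun t => G (u ^ 2 - 2 * Q t)) a b) s
    (RInt (fun t => 2 * s * G' (s ^ 2 - 2 * Q t)) a b).
Proof.
  intros HQ HG HG' Hpos.
  pose proof (locally_singleton _ _ Hpos) as Hpos_s.
  rewrite (RInt_ext _ (fun t => Derive (fun z => G (z ^ 2 - 2 * Q t)) s)).
  2:{ intros t Ht. symmetry.
      apply is_derive_unique, is_derive_comp_sq_sub, HG, Hpos_s. lra. }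
  apply (is_derive_RInt_param (fun u t => G (u ^ 2 - 2 * Q t))).
  - eapply filter_imp; [| exact Hpos]. intros u Hu t Ht.
    eexists. apply is_derive_comp_sq_sub, HG, Hu, Ht.
  - intros t Ht.
    assert (Hnear : locally_2d (fun u v => 0 < u ^ 2 - 2 * Q v) s t).
    { apply continuity_2d_pt_locally_pos.
      - apply continuity_2d_pt_sq_sub, HQ, Ht.
      - apply Hpos_s, Ht. }
    apply (continuity_2d_pt_ext_loc (fun u v => 2 * u * G' (u ^ 2 - 2 * Q v))).
    + eapply locally_2d_impl; [apply locally_2d_forall | exact Hnear].
      intros u v Huv. symmetry. apply is_derive_unique, is_derive_comp_sq_sub, HG, Huv.
    + apply continuity_2d_pt_mult.
      * apply continuity_2d_pt_mult; [apply continuity_2d_pt_const | apply continuity_2d_pt_id1].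
      * apply continuity_1d_2d_pt_comp.
        -- apply continuity_pt_filterlim, HG', Hpos_s, Ht.
        -- apply continuity_2d_pt_sq_sub, HQ, Ht.
  - eapply filter_imp; [| exact Hpos]. intros u Hu.
    apply (ex_RInt_continuous (V := R_CompleteNormedModule)). intros t Ht.
    apply (continuous_comp (fun v => u ^ 2 - 2 * Q v) G).
    + apply continuous_sq_sub, HQ, Ht.
    + apply (ex_derive_continuous (K := R_AbsRing) (V := R_NormedModule)).
      eexists. apply HG, Hu, Ht.
Qed.

Lemma is_RInt_RInt_mul (f : R -> R) (a b : R) :
  (forall t, continuous f t) ->
  is_RInt (fun p => f p * RInt f a p) a b (RInt f a b ^ 2 / 2).
Proof.
  intros Hf.
  set (F := (fun p => RInt f a p) : R -> R).
  assert (HF : forall p, is_derive F p (f p)).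
  { intros p. apply is_derive_RInt with a; [| apply Hf].
    apply filter_forall. intros q.
    apply (RInt_correct (V := R_CompleteNormedModule)), ex_RInt_continuous.
    intros; apply Hf. }
  assert (Hhalf_sq : forall x, is_derive (fun x => x ^ 2 / 2) x x)
    by (intros x; auto_derive; [auto | field]).
  assert (HFF : is_RInt (fun p => f p * F p) a b (minus (F b ^ 2 / 2) (F a ^ 2 / 2))).
  { apply (is_RInt_derive (fun p => F p ^ 2 / 2)).
    - intros p _. exact (is_derive_comp _ F p _ _ (Hhalf_sq (F p)) (HF p)).
    - intros p _. apply (continuous_mult (K := R_AbsRing) f F); [apply Hf |].
      apply (ex_derive_continuous (K := R_AbsRing) (V := R_NormedModule)).
      eexists. apply HF. }
  unfold F in HFF |- *. rewrite RInt_point in HFF.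
  unfold minus, plus, opp, zero in HFF; simpl in HFF.
  assert (E : forall x, x * (x * 1) / 2 + - (0 * (0 * 1) / 2) = x ^ 2 / 2)
    by (intros; field).
  rewrite E in HFF. exact HFF.
Qed.

Lemma is_derive_sqrt_pos (y : R) : 0 < y -> is_derive sqrt y (/ sqrt y / 2).
Proof. intros Hy. auto_derive; [exact Hy | field; apply Rgt_not_eq, sqrt_lt_R0, Hy]. Qed.

Lemma is_derive_inv_sqrt (y : R) :
  0 < y -> is_derive (fun y => / sqrt y) y (- / sqrt y ^ 3 / 2).
Proof.
  intros Hy. pose proof (sqrt_lt_R0 _ Hy).
  auto_derive; [repeat split; auto; lra | field; lra].
Qed.

Lemma continuous_inv_sqrt (y : R) : 0 < y -> continuous (fun y => / sqrt y) y.
Proof.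
  intros Hy. apply continuous_Rinv_comp; [apply continuous_sqrt |].
  apply Rgt_not_eq, sqrt_lt_R0, Hy.
Qed.

Lemma continuous_inv_sqrt_cube (y : R) : 0 < y -> continuous (fun y => / sqrt y ^ 3) y.
Proof.
  intros Hy. pose proof (sqrt_lt_R0 _ Hy).
  apply (ex_derive_continuous (K := R_AbsRing) (V := R_NormedModule)).
  auto_derive. repeat split; auto. apply Rgt_not_eq. repeat apply Rmult_lt_0_compat; lra.
Qed.

Lemma decr_function (f df : R -> R) (a b : Rbar) :
  (forall x : R, Rbar_lt a x -> Rbar_lt x b -> is_derive f x (df x)) ->
  (forall x : R, Rbar_lt a x -> Rbar_lt x b -> df x < 0) ->
  forall x y : R, Rbar_lt a x -> x < y -> Rbar_lt y b -> f y < f x.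
Proof.
  intros Hf Hdf x y Hx Hxy Hy.
  apply Ropp_lt_cancel.
  apply (incr_function (fun x => - f x) a b (fun x => - df x)); auto.
  - intros z Hz1 Hz2. apply (is_derive_opp f), Hf; auto.
  - intros z Hz1 Hz2. specialize (Hdf z Hz1 Hz2). lra.
Qed.

Section StreamSolutions.

Variables (Q : R -> R) (s0 : R).
Hypothesis Q_cont : forall t, continuous Q t.
Hypothesis s0_ge0 : 0 <= s0.
Hypothesis Q_le : forall t, 2 * Q t <= s0 ^ 2.

Definition stream_speed (s : R) := RInt (fun t => sqrt (s ^ 2 - 2 * Q t)) 0 1.
Definition stream_depth (s : R) := RInt (fun t => / sqrt (s ^ 2 - 2 * Q t)) 0 1.
Definition stream_crit (s : R) := RInt (fun t => / sqrt (s ^ 2 - 2 * Q t) ^ 3) 0 1.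
Definition stream_bernoulli (s : R) := s ^ 2 / 2 - Q 1 + stream_depth s.
Definition stream_flow_force (r s : R) :=
  stream_speed s + (Q 1 + r - s ^ 2 / 2) * stream_depth s - stream_depth s ^ 2 / 2.

Lemma stream_pos (s t : R) : s0 < s -> 0 < s ^ 2 - 2 * Q t.
Proof. intros Hs. pose proof (Q_le t). nra. Qed.

Lemma sqrt_stream_pos (s t : R) : s0 < s -> 0 < sqrt (s ^ 2 - 2 * Q t).
Proof. intros Hs. apply sqrt_lt_R0, stream_pos, Hs. Qed.

Lemma continuous_stream (G : R -> R) (s t : R) :
  (forall y, 0 < y -> continuous G y) -> s0 < s ->
  continuous (fun t => G (s ^ 2 - 2 * Q t)) t.
Proof.
  intros HG Hs. apply (continuous_comp (fun t => s ^ 2 - 2 * Q t) G).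
  - apply continuous_sq_sub, Q_cont.
  - apply HG, stream_pos, Hs.
Qed.

Lemma ex_RInt_stream (G : R -> R) (s a b : R) :
  (forall y, 0 < y -> continuous G y) -> s0 < s ->
  ex_RInt (fun t => G (s ^ 2 - 2 * Q t)) a b.
Proof.
  intros HG Hs. apply (ex_RInt_continuous (V := R_CompleteNormedModule)).
  intros t _. apply continuous_stream; assumption.
Qed.

Lemma is_derive_stream_RInt (G G' : R -> R) (s : R) :
  (forall y, 0 < y -> is_derive G y (G' y)) ->
  (forall y, 0 < y -> continuous G' y) -> s0 < s ->
  is_derive (fun u => RInt (fun t => G (u ^ 2 - 2 * Q t)) 0 1) s
    (RInt (fun t => 2 * s * G' (s ^ 2 - 2 * Q t)) 0 1).
Proof.
  intros HG HG' Hs. apply is_derive_RInt_sq_sub; auto.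
  eapply filter_imp; [| exact (open_gt s0 s Hs)].
  intros u Hu t _. apply stream_pos, Hu.
Qed.

Lemma is_derive_stream_speed (s : R) :
  s0 < s -> is_derive stream_speed s (s * stream_depth s).
Proof.
  intros Hs.
  replace (s * stream_depth s)
    with (RInt (fun t => 2 * s * (/ sqrt (s ^ 2 - 2 * Q t) / 2)) 0 1).
  - apply (is_derive_stream_RInt sqrt (fun y => / sqrt y / 2)); auto using is_derive_sqrt_pos.
    intros y Hy. pose proof (sqrt_lt_R0 _ Hy).
    apply (ex_derive_continuous (K := R_AbsRing) (V := R_NormedModule)).
    auto_derive. repeat split; auto; lra.
  - apply is_RInt_unique.
    apply (is_RInt_ext (fun t => s * / sqrt (s ^ 2 - 2 * Q t))).
    + intros t _. simpl. field. apply Rgt_not_eq, sqrt_stream_pos, Hs.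
    + apply (is_RInt_scal (fun t => / sqrt (s ^ 2 - 2 * Q t))).
      apply (RInt_correct (V := R_CompleteNormedModule)).
      exact (ex_RInt_stream _ s 0 1 continuous_inv_sqrt Hs).
Qed.

Lemma is_derive_stream_depth (s : R) :
  s0 < s -> is_derive stream_depth s (- s * stream_crit s).
Proof.
  intros Hs.
  replace (- s * stream_crit s)
    with (RInt (fun t => 2 * s * (- / sqrt (s ^ 2 - 2 * Q t) ^ 3 / 2)) 0 1).
  - apply (is_derive_stream_RInt (fun y => / sqrt y) (fun y => - / sqrt y ^ 3 / 2));
      auto using is_derive_inv_sqrt.
    intros y Hy. pose proof (sqrt_lt_R0 _ Hy).
    apply (ex_derive_continuous (K := R_AbsRing) (V := R_NormedModule)).
    auto_derive. repeat split; auto. apply Rgt_not_eq. repeat apply Rmult_lt_0_compat; lra.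
  - apply is_RInt_unique.
    apply (is_RInt_ext (fun t => - s * / sqrt (s ^ 2 - 2 * Q t) ^ 3)).
    + intros t _. simpl. field. apply Rgt_not_eq, sqrt_stream_pos, Hs.
    + apply (is_RInt_scal (fun t => / sqrt (s ^ 2 - 2 * Q t) ^ 3)).
      apply (RInt_correct (V := R_CompleteNormedModule)).
      exact (ex_RInt_stream _ s 0 1 continuous_inv_sqrt_cube Hs).
Qed.

Lemma is_derive_stream_bernoulli (s : R) :
  s0 < s -> is_derive stream_bernoulli s (s * (1 - stream_crit s)).
Proof.
  intros Hs. pose proof (is_derive_stream_depth s Hs) as HD.
  unfold stream_bernoulli. auto_derive.
  - repeat split; eexists; eassumption.
  - replace (Derive (fun x => stream_depth x) s) with (- s * stream_crit s)
      by (symmetry; apply is_derive_unique, HD).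
    field.
Qed.

Lemma is_derive_stream_flow_force (r s : R) :
  s0 < s -> is_derive (stream_flow_force r) s (s * (stream_bernoulli s - r) * stream_crit s).
Proof.
  intros Hs.
  pose proof (is_derive_stream_speed s Hs) as HV.
  pose proof (is_derive_stream_depth s Hs) as HD.
  unfold stream_flow_force. auto_derive.
  - repeat split; eexists; eassumption.
  - replace (Derive (fun x => stream_speed x) s) with (s * stream_depth s)
      by (symmetry; apply is_derive_unique, HV).
    replace (Derive (fun x => stream_depth x) s) with (- s * stream_crit s)
      by (symmetry; apply is_derive_unique, HD).
    unfold stream_bernoulli. field.
Qed.

Lemma stream_crit_pos (s : R) : s0 < s -> 0 < stream_crit s.
Proof.
  intros Hs. apply RInt_gt_0; [lra | |].
  - intros t _. apply Rinv_0_lt_compat, pow_lt, sqrt_stream_pos, Hs.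
  - intros t _. exact (continuous_stream _ s t continuous_inv_sqrt_cube Hs).
Qed.

Lemma stream_crit_decreasing (a b : R) :
  s0 < a -> a < b -> stream_crit b < stream_crit a.
Proof.
  intros Ha Hab. apply RInt_lt; [lra | | |].
  - intros t _. exact (continuous_stream _ a t continuous_inv_sqrt_cube Ha).
  - intros t _. exact (continuous_stream _ b t continuous_inv_sqrt_cube ltac:(lra)).
  - intros t _. pose proof (sqrt_stream_pos a t Ha) as Hqa.
    assert (Hq : sqrt (a ^ 2 - 2 * Q t) < sqrt (b ^ 2 - 2 * Q t)).
    { apply sqrt_lt_1; pose proof (stream_pos a t Ha); nra. }
    set (qa := sqrt (a ^ 2 - 2 * Q t)) in *. set (qb := sqrt (b ^ 2 - 2 * Q t)) in *.
    apply Rinv_lt_contravar.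
    + apply Rmult_lt_0_compat; apply pow_lt; lra.
    + assert (qa * qa < qb * qb) by nra. simpl. nra.
Qed.

Lemma stream_bernoulli_decreasing (sc : R) :
  stream_crit sc = 1 ->
  forall a b, s0 < a -> a < b -> b < sc -> stream_bernoulli b < stream_bernoulli a.
Proof.
  intros Hcrit.
  apply (decr_function _ (fun s => s * (1 - stream_crit s)) s0 sc); simpl.
  - intros x Hx _. apply is_derive_stream_bernoulli, Hx.
  - intros x Hx1 Hx2. pose proof (stream_crit_decreasing x sc Hx1 Hx2). nra.
Qed.

Lemma stream_bernoulli_increasing (sc : R) :
  s0 < sc -> stream_crit sc = 1 ->
  forall a b, sc < a -> a < b -> stream_bernoulli a < stream_bernoulli b.
Proof.
  intros Hsc Hcrit a b Ha Hab.
  apply (incr_function _ sc p_infty (fun s => s * (1 - stream_crit s))); simpl; auto.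
  - intros x Hx _. apply is_derive_stream_bernoulli. lra.
  - intros x Hx _. pose proof (stream_crit_decreasing sc x Hsc Hx). nra.
Qed.

Lemma stream_flow_force_increasing (r a : R) (b : Rbar) :
  s0 <= a -> (forall x : R, a < x -> Rbar_lt x b -> r < stream_bernoulli x) ->
  forall x y : R, a < x -> x < y -> Rbar_lt y b ->
  stream_flow_force r x < stream_flow_force r y.
Proof.
  intros Ha HB.
  apply (incr_function _ a b (fun s => s * (stream_bernoulli s - r) * stream_crit s)).
  - intros x Hx _. simpl in Hx. apply is_derive_stream_flow_force. lra.
  - intros x Hx1 Hx2. simpl in Hx1.
    pose proof (HB x Hx1 Hx2). pose proof (stream_crit_pos x ltac:(lra)).
    apply Rmult_lt_0_compat; [apply Rmult_lt_0_compat |]; lra.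
Qed.

Lemma stream_flow_force_decreasing (r a b : R) :
  s0 <= a -> (forall x, a < x < b -> stream_bernoulli x < r) ->
  forall x y, a < x -> x < y -> y < b ->
  stream_flow_force r y < stream_flow_force r x.
Proof.
  intros Ha HB.
  apply (decr_function _ (fun s => s * (stream_bernoulli s - r) * stream_crit s) a b).
  - intros x Hx _. simpl in Hx. apply is_derive_stream_flow_force. lra.
  - intros x Hx1 Hx2. simpl in Hx1, Hx2.
    pose proof (HB x (conj Hx1 Hx2)). pose proof (stream_crit_pos x ltac:(lra)).
    assert (0 < x * (r - stream_bernoulli x) * stream_crit x)
      by (apply Rmult_lt_0_compat; [apply Rmult_lt_0_compat |]; lra).
    lra.
Qed.

Lemma is_RInt_stream_speed_depth (k s : R) :
  s0 < s ->
  is_RInt (fun t => sqrt (s ^ 2 - 2 * Q t) + k / sqrt (s ^ 2 - 2 * Q t)) 0 1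
    (stream_speed s + k * stream_depth s).
Proof.
  intros Hs.
  apply (is_RInt_plus (fun t => sqrt (s ^ 2 - 2 * Q t))
                      (fun t => k / sqrt (s ^ 2 - 2 * Q t))).
  - apply (RInt_correct (V := R_CompleteNormedModule)).
    apply (ex_RInt_stream sqrt); [intros y _; apply continuous_sqrt | exact Hs].
  - apply (is_RInt_scal (fun t => / sqrt (s ^ 2 - 2 * Q t))).
    apply (RInt_correct (V := R_CompleteNormedModule)).
    exact (ex_RInt_stream _ s 0 1 continuous_inv_sqrt Hs).
Qed.

Lemma sqrt_stream_ge (s t : R) : s0 <= s -> s - s0 <= sqrt (s ^ 2 - 2 * Q t).
Proof.
  intros Hs. rewrite <- (sqrt_pow2 (s - s0)) by lra.
  apply sqrt_le_1_alt. pose proof (Q_le t). nra.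
Qed.

Lemma stream_speed_depth_lower_bound (r s : R) :
  s0 + 1 <= s ->
  (s - s0) / 2 - Rabs (Q 1 + r - s0 ^ 2 / 2)
  <= stream_speed s + (Q 1 + r - s ^ 2 / 2) * stream_depth s.
Proof.
  intros Hs. assert (Hs' : s0 < s) by lra.
  set (c := Q 1 + r - s0 ^ 2 / 2). set (k := Q 1 + r - s ^ 2 / 2).
  pose proof (is_RInt_stream_speed_depth k s Hs') as HI.
  rewrite <- (is_RInt_unique _ _ _ _ HI).
  apply Rle_trans with (RInt (fun _ => (s - s0) / 2 - Rabs c) 0 1).
  { rewrite RInt_const. simpl. unfold scal; simpl; unfold mult; simpl. lra. }
  apply RInt_le; [lra | apply ex_RInt_const | eexists; exact HI |].
  intros t _. pose proof (sqrt_stream_ge s t ltac:(lra)). pose proof (Q_le t).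
  pose proof (Rabs_pos c). pose proof (Rle_abs (- c)) as Hc. rewrite Rabs_Ropp in Hc.
  assert (Hsq : sqrt (s ^ 2 - 2 * Q t) ^ 2 = s ^ 2 - 2 * Q t)
    by (apply pow2_sqrt; pose proof (stream_pos s t Hs'); lra).
  set (q := sqrt (s ^ 2 - 2 * Q t)) in *.
  replace (q + k / q) with (q / 2 + (Q 1 + r - Q t) / q).
  2:{ unfold k. replace (s ^ 2) with (q ^ 2 + 2 * Q t) by lra. field. lra. }
  assert (0 < / q <= 1).
  { split; [apply Rinv_0_lt_compat | rewrite <- Rinv_1; apply Rinv_le_contravar]; lra. }
  assert (c <= Q 1 + r - Q t) by (unfold c; lra).
  unfold Rdiv at 2. destruct (Rle_dec 0 (Q 1 + r - Q t)); nra.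
Qed.

Lemma stream_depth_le_1 (s : R) : s0 + 1 <= s -> Rabs (stream_depth s) <= 1.
Proof.
  intros Hs. apply Rle_trans with ((1 - 0) * 1); [| lra].
  apply abs_RInt_le_const; [lra | exact (ex_RInt_stream _ s 0 1 continuous_inv_sqrt ltac:(lra)) |].
  intros t _. pose proof (sqrt_stream_ge s t ltac:(lra)).
  rewrite Rabs_pos_eq by (left; apply Rinv_0_lt_compat; lra).
  rewrite <- Rinv_1. apply Rinv_le_contravar; lra.
Qed.

Lemma stream_flow_force_lower_bound (r s : R) :
  s0 + 1 <= s ->
  (s - s0) / 2 - Rabs (Q 1 + r - s0 ^ 2 / 2) - 1 / 2 <= stream_flow_force r s.
Proof.
  intros Hs.
  pose proof (stream_speed_depth_lower_bound r s Hs).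
  pose proof (stream_depth_le_1 s Hs) as HD.
  assert (stream_depth s ^ 2 <= 1)
    by (rewrite <- pow2_abs; pose proof (Rabs_pos (stream_depth s)); nra).
  unfold stream_flow_force. lra.
Qed.

Lemma is_lim_stream_flow_force (r : R) : is_lim (stream_flow_force r) p_infty p_infty.
Proof.
  intros P [N HN].
  pose proof (stream_flow_force_lower_bound r) as Hlow.
  set (K := Rabs (Q 1 + r - s0 ^ 2 / 2)) in Hlow.
  exists (Rmax (s0 + 1) (2 * (N + K + 1) + s0)). intros s Hs. apply HN.
  pose proof (Rmax_l (s0 + 1) (2 * (N + K + 1) + s0)).
  pose proof (Rmax_r (s0 + 1) (2 * (N + K + 1) + s0)).
  specialize (Hlow s ltac:(lra)). lra.
Qed.

Lemma flow_force_eq_stream (om : R -> R) (r s : R) :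
  (forall t, 0 <= t <= 1 -> Q t = Omega om t) -> s0 < s ->
  flow_force om s r = stream_flow_force r s.
Proof.
  intros HQ Hs. unfold flow_force. apply is_RInt_unique.
  set (k := Q 1 + r - s ^ 2 / 2).
  apply (is_RInt_ext
    (fun p => (sqrt (s ^ 2 - 2 * Q p) + k / sqrt (s ^ 2 - 2 * Q p))
              - / sqrt (s ^ 2 - 2 * Q p) * RInt (fun t => / sqrt (s ^ 2 - 2 * Q t)) 0 p)).
  - intros p Hp01. rewrite Rmin_left, Rmax_right in Hp01 by lra.
    unfold Hfun, Hp.
    rewrite (RInt_ext (fun t => / sqrt (s ^ 2 - 2 * Omega om t))
                      (fun t => / sqrt (s ^ 2 - 2 * Q t))).
    2:{ intros t Ht. rewrite Rmin_left, Rmax_right in Ht by lra. rewrite HQ by lra. reflexivity. }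
    rewrite <- (HQ p), <- (HQ 1) by lra.
    pose proof (sqrt_stream_pos s p Hs).
    assert (Hsq : sqrt (s ^ 2 - 2 * Q p) ^ 2 = s ^ 2 - 2 * Q p)
      by (apply pow2_sqrt; pose proof (stream_pos s p Hs); lra).
    set (q := sqrt (s ^ 2 - 2 * Q p)) in *.
    unfold k. replace (s ^ 2) with (q ^ 2 + 2 * Q p) by lra.
    simpl. field. lra.
  - apply (is_RInt_minus (V := R_NormedModule)).
    + apply is_RInt_stream_speed_depth, Hs.
    + apply is_RInt_RInt_mul. intros t.
      apply (continuous_stream (fun y => / sqrt y)); [exact continuous_inv_sqrt | exact Hs].
Qed.

Theorem stream_flow_force_shape (sc r sm sp : R) :
  s0 < sc -> stream_crit sc = 1 -> stream_bernoulli sc < r ->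
  s0 < sm < sc -> sc < sp -> stream_bernoulli sm = r -> stream_bernoulli sp = r ->
  (forall a b, s0 < a -> a < b -> b < sm -> stream_flow_force r a < stream_flow_force r b) /\
  (forall a b, sm < a -> a < b -> b < sp -> stream_flow_force r b < stream_flow_force r a) /\
  (forall a b, sp < a -> a < b -> stream_flow_force r a < stream_flow_force r b) /\
  is_lim (stream_flow_force r) p_infty p_infty.
Proof.
  intros Hsc Hcrit HBsc [Hsm1 Hsm2] Hsp HBsm HBsp.
  pose proof (stream_bernoulli_decreasing sc Hcrit) as Hdec.
  pose proof (stream_bernoulli_increasing sc Hsc Hcrit) as Hinc.
  split; [| split; [| split]].
  - intros a b Ha Hab Hb. apply (stream_flow_force_increasing r s0 sm); simpl; auto; try lra.
    intros x Hx1 Hx2. simpl in Hx2. rewrite <- HBsm. apply Hdec; lra.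
  - intros a b Ha Hab Hb. apply (stream_flow_force_decreasing r sm sp); auto; try lra.
    intros x [Hx1 Hx2]. destruct (Rtotal_order x sc) as [Hx | [Hx | Hx]].
    + rewrite <- HBsm. apply Hdec; lra.
    + subst x. exact HBsc.
    + rewrite <- HBsp. apply Hinc; lra.
  - intros a b Ha Hab. apply (stream_flow_force_increasing r sp p_infty); simpl; auto; try lra.
    intros x Hx _. rewrite <- HBsp. apply Hinc; lra.
  - apply is_lim_stream_flow_force.
Qed.

End StreamSolutions.

Lemma is_derive_Omega (om : R -> R) (p : R) :
  (forall x, continuous om x) -> is_derive (Omega om) p (om p).
Proof.
  intros Hom. apply is_derive_RInt with 0; [| apply Hom].
  apply filter_forall. intros q.
  apply (RInt_correct (V := R_CompleteNormedModule)), ex_RInt_continuous.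
  intros; apply Hom.
Qed.

Lemma continuous_Rmin_const (f : R -> R) (c x : R) :
  continuous f x -> continuous (fun t => Rmin (f t) c) x.
Proof.
  intros Hf.
  apply (continuous_ext (fun t => (f t + c - Rabs (f t - c)) / 2)).
  - intros t. unfold Rmin, Rabs. destruct (Rle_dec (f t) c), (Rcase_abs (f t - c)); lra.
  - apply (continuous_mult (K := R_AbsRing) (fun t => f t + c - Rabs (f t - c)) (fun _ => / 2));
      [| apply continuous_const].
    apply (continuous_minus (fun t => f t + c) (fun t => Rabs (f t - c))).
    + apply (continuous_plus f (fun _ => c)); [exact Hf | apply continuous_const].
    + apply (continuous_Rabs_comp (fun t => f t - c)).
      apply (continuous_minus f (fun _ => c)); [exact Hf | apply continuous_const].
Qed.

(* Capping Omega at M/2 keeps it unchanged on [0, 1] but makes s^2 - 2 Q positive on all of R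
   for s > sqrt M; the fundamental theorem of calculus in [is_RInt_RInt_mul] needs the
   integrand to be continuous around the endpoints of [0, 1]. *)
Lemma Omega_cap (om : R -> R) (M : R) :
  (forall x, continuous om x) -> (forall p, 0 <= p <= 1 -> 2 * Omega om p <= M) ->
  exists Q : R -> R, (forall t, continuous Q t) /\ (forall t, 2 * Q t <= sqrt M ^ 2) /\
                     (forall t, 0 <= t <= 1 -> Q t = Omega om t).
Proof.
  intros Hom Hmax.
  assert (HM : sqrt M ^ 2 = M).
  { apply pow2_sqrt. pose proof (Hmax 0 ltac:(lra)).
    assert (Omega om 0 = 0) by exact (RInt_point 0 om). lra. }
  exists (fun t => Rmin (Omega om t) (M / 2)). split; [| split].
  - intros t. apply continuous_Rmin_const.
    apply (ex_derive_continuous (K := R_AbsRing) (V := R_NormedModule)).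
    eexists. apply is_derive_Omega, Hom.
  - intros t. pose proof (Rmin_r (Omega om t) (M / 2)). lra.
  - intros t Ht. apply Rmin_left. pose proof (Hmax t Ht). lra.
Qed.

Lemma Bern_eq_stream (om Q : R -> R) (s : R) :
  (forall t, 0 <= t <= 1 -> Q t = Omega om t) -> Bern om s = stream_bernoulli Q s.
Proof.
  intros HQ. unfold Bern, stream_bernoulli, depth, Hfun, Hp, stream_depth.
  rewrite HQ by lra. f_equal.
  apply RInt_ext. intros t Ht. rewrite Rmin_left, Rmax_right in Ht by lra.
  rewrite HQ by lra. reflexivity.
Qed.

Lemma crit_eq_stream (om Q : R -> R) (s : R) :
  (forall t, 0 <= t <= 1 -> Q t = Omega om t) ->
  RInt (fun p => / sqrt (s ^ 2 - 2 * Omega om p) ^ 3) 0 1 = stream_crit Q s.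
Proof.
  intros HQ. apply RInt_ext. intros t Ht. rewrite Rmin_left, Rmax_right in Ht by lra.
  rewrite HQ by lra. reflexivity.
Qed.

Theorem lemma3p6 (om : R -> R) (M s0 sc : R) (R0 : Rbar) (r sm sp : R) :
  (* vorticity: continuous *)
  (forall x, continuous om x) ->
  (* M = max_{[0,1]} 2 Omega, s0 = sqrt M *)
  (forall p, 0 <= p <= 1 -> 2 * Omega om p <= M) ->
  (exists p, 0 <= p <= 1 /\ 2 * Omega om p = M) ->
  s0 = sqrt M ->
  (* critical value s_c *)
  s0 < sc ->
  RInt (fun p => / (sqrt (sc ^ 2 - 2 * Omega om p)) ^ 3) 0 1 = 1 ->
  (* R_0 = lim_{s -> s0+} R(s), R_c = R(s_c) *)
  filterlim (Bern om) (at_right s0) (Rbar_locally R0) ->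
  (* r in (R_c, R_0) *)
  Bern om sc < r -> Rbar_lt r R0 ->
  (* s_-(r) < s_c < s_+(r), the two solutions of R(s) = r *)
  s0 < sm < sc -> sc < sp -> Bern om sm = r -> Bern om sp = r ->
  (forall a b, s0 < a -> a < b -> b < sm -> flow_force om a r < flow_force om b r) /\
  (forall a b, sm < a -> a < b -> b < sp -> flow_force om b r < flow_force om a r) /\
  (forall a b, sp < a -> a < b -> flow_force om a r < flow_force om b r) /\
  is_lim (fun s => flow_force om s r) p_infty p_infty.
Proof.
  intros Hom Hmax _ Hs0 Hsc Hcrit _ HBsc _ Hsm Hsp HBsm HBsp.
  destruct (Omega_cap om M Hom Hmax) as (Q & Q_cont & Q_le & HQ).
  rewrite <- Hs0 in Q_le.
  assert (s0_ge0 : 0 <= s0) by (rewrite Hs0; apply sqrt_pos).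
  rewrite (crit_eq_stream om Q sc HQ) in Hcrit.
  rewrite (fun s => Bern_eq_stream om Q s HQ) in HBsc, HBsm, HBsp.
  pose proof (fun s => flow_force_eq_stream Q s0 Q_cont s0_ge0 Q_le om r s HQ) as HF.
  destruct (stream_flow_force_shape Q s0 Q_cont s0_ge0 Q_le sc r sm sp
              Hsc Hcrit HBsc Hsm Hsp HBsm HBsp) as (Hleft & Hmid & Hright & Hlim).
  split; [| split; [| split]].
  - intros a b Ha Hab Hb. rewrite !HF by lra. apply Hleft; lra.
  - intros a b Ha Hab Hb. rewrite !HF by lra. apply Hmid; lra.
  - intros a b Ha Hab. rewrite !HF by lra. apply Hright; lra.
  - apply (is_lim_ext_loc (stream_flow_force Q r)); [| exact Hlim].
    exists s0. intros s Hs. symmetry. apply HF, Hs.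
Qed.
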